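(* Let $R$ be a ring and $A$ an $R$-module with $\mathrm{sr}_R(A)$ finite. Let $B\subseteq C$ be $R$-submodules of $A$. Then (i) $\mathrm{sr}_R(B)\le\mathrm{sr}_R(C)\le\mathrm{sr}_R(A)$; (ii) $\mathrm{sr}_R(C/B)\le\mathrm{sr}_R(A/B)\le\mathrm{sr}_R(A)$.
   Context: A generating subset of an $R$-submodule is minimal if no proper subset of it generates that submodule. An $R$-module $M$ has special rank $\mathrm{sr}_R(M)=r$ if every finitely generated $R$-submodule of $M$ can be generated by $r$ elements and some finitely generated $R$-submodule of $M$ has a minimal generating subset of exactly $r$ elements. *)

From HB Require Import structures.
From mathcomp Require Import all_boot all_algebra.
Set Implicit Arguments. Unset Strict Implicit. Unset Printing Implicit Defensive.
Import GRing.Theory.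
Local Open Scope ring_scope.

Section SpecialRank.
Variables (R : nzRingType) (V : lmodType R).

Definition is_submod (M : V -> Prop) : Prop :=
  M 0 /\ (forall (a : R) (x y : V), M x -> M y -> M (a *: x + y)).

Definition span (s : seq V) : V -> Prop :=
  fun v => exists c : 'I_(size s) -> R, v = \sum_(i < size s) c i *: s`_i.

Definition sr_bound (M : V -> Prop) (r : nat) : Prop :=
  forall N : V -> Prop, is_submod N -> (forall v, N v -> M v) ->
    (exists s : seq V, forall v, N v <-> span s v) ->
    exists t : seq V, size t = r /\ (forall v, N v <-> span t v).

Definition is_sr (M : V -> Prop) (r : nat) : Prop :=
  sr_bound M r /\ forall r', sr_bound M r' -> (r <= r')%N.

End SpecialRank.

From Pilot Require Import Defs.
From HB Require Import structures.
From mathcomp Require Import all_boot all_algebra.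
From Stdlib Require Import Classical.
Set Implicit Arguments. Unset Strict Implicit. Unset Printing Implicit Defensive.
Import GRing.Theory.
Local Open Scope ring_scope.

Local Notation span := Defs.span.

(* A bound r on the number of generators of finitely generated submodules
   passes to submodules (their finitely generated submodules are among those
   of the bigger module) and to surjective images (lift a generating family,
   shrink the submodule it spans upstairs to r generators, push them down).
   A bound always yields a least bound, the special rank, below it; so every
   special rank in the statement exists and is dominated by the next one. *)

Section SpecialRankMonotonicity.
Variable R : nzRingType.

Lemma spanE (V : lmodType R) (s : seq V) v :
  span s v <-> exists cs : seq R, v = \sum_(0 <= i < size s) cs`_i *: s`_i.
Proof.
split=> [[c ->]|[cs ->]]; last by exists (fun i => cs`_i); rewrite big_mkord.
exists (mkseq (fun i => if insub i is Some j then c j else 0) (size s)).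
by rewrite big_mkord; apply: eq_bigr => i _; rewrite nth_mkseq // valK.
Qed.

Lemma span_submod (V : lmodType R) (s : seq V) : is_submod (span s).
Proof.
split=> [|a x y /spanE[cs ->] /spanE[ds ->]]; apply/spanE.
  by exists [::]; rewrite big1 // => i _; rewrite nth_nil scale0r.
exists (mkseq (fun i => a * cs`_i + ds`_i) (size s)).
rewrite scaler_sumr -big_split /=; apply: eq_big_nat => i /andP[_ lt_i_s].
by rewrite nth_mkseq // scalerDl scalerA.
Qed.

Lemma span_map (V Q : lmodType R) (pi : {linear V -> Q}) (s : seq V) q :
  span (map pi s) q <-> exists v, span s v /\ pi v = q.
Proof.
have pi_comb (cs : seq R) : pi (\sum_(0 <= i < size s) cs`_i *: s`_i) =
    \sum_(0 <= i < size (map pi s)) cs`_i *: (map pi s)`_i.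
  rewrite linear_sum size_map; apply: eq_big_nat => i /andP[_ lt_i_s].
  by rewrite linearZ (nth_map 0).
split=> [/spanE[cs ->]|[v [/spanE[cs ->] <-]]]; last by apply/spanE; exists cs.
exists (\sum_(0 <= i < size s) cs`_i *: s`_i).
by split; [apply/spanE; exists cs|].
Qed.

Lemma map_surj (aT rT : Type) (f : aT -> rT) :
  (forall y, exists x, f x = y) -> forall s : seq rT, exists s', map f s' = s.
Proof.
move=> f_surj; elim=> [|y s [s' <-]]; first by exists [::].
by have [x <-] := f_surj y; exists (x :: s').
Qed.

Lemma sr_boundS (V : lmodType R) (M M' : V -> Prop) r :
  (forall v, M v -> M' v) -> sr_bound M' r -> sr_bound M r.
Proof. by move=> sMM' bM' N subN sNM; apply: bM' => // v /sNM /sMM'. Qed.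

Lemma sr_bound_surj (V Q : lmodType R) (pi : {linear V -> Q}) r :
  (forall q, exists v, pi v = q) ->
  sr_bound (fun _ : V => True) r -> sr_bound (fun _ : Q => True) r.
Proof.
move=> pi_surj bV N _ _ [s defN].
have [s' def_s] := map_surj pi_surj s.
have [t [size_t span_t]] :=
  bV _ (span_submod s') (fun _ _ => I) (ex_intro _ s' (fun=> iff_refl _)).
exists (map pi t); split=> [|q]; first by rewrite size_map.
by rewrite defN -def_s !span_map; split=> -[v [/span_t span_v <-]]; exists v.
Qed.

Lemma sr_bound_is_sr (V : lmodType R) (M : V -> Prop) r :
  sr_bound M r -> exists2 r0, is_sr M r0 & (r0 <= r)%N.
Proof.
elim/ltn_ind: r => r IHr bMr.
case: (classic (exists2 r', (r' < r)%N & sr_bound M r')) => [[r' lt_r'r bMr']|].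
  have [r0 srM le_r0r'] := IHr r' lt_r'r bMr'.
  by exists r0 => //; exact: leq_trans le_r0r' (ltnW lt_r'r).
move=> no_smaller; exists r => //; split=> // r' bMr'.
by rewrite leqNgt; apply/negP => lt_r'r; apply: no_smaller; exists r'.
Qed.

End SpecialRankMonotonicity.

Theorem lemma1 (R : nzRingType) (V : lmodType R) (B C : V -> Prop) (rA : nat) :
  is_sr (fun _ : V => True) rA ->
  is_submod B -> is_submod C -> (forall v, B v -> C v) ->
  (exists rB rC : nat,
      is_sr B rB /\ is_sr C rC /\ (rB <= rC)%N /\ (rC <= rA)%N) /\
  (forall (Q : lmodType R) (pi : {linear V -> Q}),
      (forall q : Q, exists v : V, pi v = q) ->
      (forall v : V, pi v = 0 <-> B v) ->
      exists rCB rAB : nat,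
        is_sr (fun q : Q => exists c : V, C c /\ pi c = q) rCB /\
        is_sr (fun _ : Q => True) rAB /\ (rCB <= rAB)%N /\ (rAB <= rA)%N).
Proof.
move=> [bA _] _ _ sBC; split.
  have bC := sr_boundS (M := C) (fun _ _ => I) bA.
  have [rC [bC_rC minC] le_rC_rA] := sr_bound_is_sr bC.
  have bB := sr_boundS sBC bC_rC.
  have [rB [bB_rB minB] le_rB_rC] := sr_bound_is_sr bB.
  by exists rB, rC.
move=> Q pi pi_surj _.
have [rAB [bAB minAB] le_rAB_rA] := sr_bound_is_sr (sr_bound_surj pi_surj bA).
pose CB q := exists c, C c /\ pi c = q.
have bCB := sr_boundS (M := CB) (fun _ _ => I) bAB.
have [rCB [bCB_rCB minCB] le_rCB_rAB] := sr_bound_is_sr bCB.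
by exists rCB, rAB.
Qed.
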